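(* Let $q$ be a prime power, $n\ge2$, and $s$ an odd positive integer with $\gcd(s,n)=1$. If $n$ and $d$ have opposite parity and $1\le d\le n-1$, then the code $$\mathcal{H}_{n,d,s}=\Big\{\sum_{j=1}^{\frac{n-d+1}{2}}\Big((b_jx)^{q^{2s(n-j+1)}}+b_j^{q^s}x^{q^{2sj}}\Big): b_1,\dots,b_{\frac{n-d+1}{2}}\in\mathbb{F}_{q^{2n}}\Big\}$$ is an $(n-d+1)$-design. If $n$ and $d$ are both odd with $1\le d\le n-1$, then the code $$\mathcal{E}_{n,d,s}=\Big\{(b_0x)^{q^{s(n+1)}}+\sum_{j=1}^{\frac{n-d}{2}}\Big((b_jx)^{q^{s(n+2j+1)}}+b_j^{q^s}x^{q^{s(n-2j+1)}}\Big): b_0\in\mathbb{F}_{q^n},\ b_1,\dots,b_{\frac{n-d}{2}}\in\mathbb{F}_{q^{2n}}\Big\}$$ is an $(n-d+1)$-design.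
   Context: Polynomials are $\mathbb{F}_{q^2}$-linearized polynomials over $\mathbb{F}_{q^{2n}}$ taken modulo $x^{q^{2n}}-x$, i.e. elements of $\mathcal{L}_{n,q^2}=\{\sum_{i=0}^{n-1}a_ix^{q^{2i}}:a_i\in\mathbb{F}_{q^{2n}}\}$, viewed as $\mathbb{F}_{q^2}$-linear maps $\mathbb{F}_{q^{2n}}\to\mathbb{F}_{q^{2n}}$; the rank of $f$ is $\dim_{\mathbb{F}_{q^2}}$ of its image. The paper models Hermitian forms of order $n$ over $\mathbb{F}_{q^2}$ by the set $\mathcal{H}_n(q^2)=\{\sum_{i=0}^{n-1}c_ix^{q^{2i}}: c_{n-i+1}=c_i^{q^{2n-2i+1}},\ i\in\{0,\dots,n-1\}\}$ (indices modulo $n$), which is $\mathbb{F}_q$-linearly and rank-preservingly identified with the set $\mathrm{H}_n(q^2)$ of Hermitian $n\times n$ matrices over $\mathbb{F}_{q^2}$. On $\mathcal{H}_n(q^2)$ the pairing is $b(f,g)=\mathrm{Tr}_{q^{2n}/q^2}\big(\sum_{i=0}^{n-1}a_ib_i\big)$ for $f=\sum a_ix^{q^{2i}}$, $g=\sum b_ix^{q^{2i}}$, where $\mathrm{Tr}_{q^{2n}/q^2}(x)=\sum_{i=0}^{n-1}x^{q^{2i}}$; the dual of an additive code $\mathcal{C}$ is $\mathcal{C}^\perp=\{f\in\mathcal{H}_n(q^2): b(f,g)=0\ \forall g\in\mathcal{C}\}$. An additive code $\mathcal{C}$ is a $t$-design if its dual $\mathcal{C}^\perp$ contains no nonzero element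 of rank in $\{1,\dots,t\}$ (equivalently, in the matrix model, the dual inner distribution satisfies $A'_1=\dots=A'_t=0$). The codes $\mathcal{H}_{n,d,s}$ and $\mathcal{E}_{n,d,s}$ are known (Schmidt) to be maximum $\mathbb{F}_q$-linear Hermitian $d$-codes, i.e. of size $q^{n(n-d+1)}$ with all nonzero elements of rank at least $d$. *)

From HB Require Import structures.
From mathcomp Require Import all_boot all_order all_algebra all_field.
Set Implicit Arguments. Unset Strict Implicit. Unset Printing Implicit Defensive.
Import GRing.Theory.
Local Open Scope ring_scope.

Section Defs.
Variable F : finFieldType.

(* An element of L_{n,q^2} (F = F_{q^{2n}}) is represented by its coefficient
   vector c, standing for  sum_{i<n} c_i x^{q^{2i}}. *)
Definition lpoly (n : nat) := {ffun 'I_n -> F}.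

Definition coef (n : nat) (c : lpoly n) (k : nat) : F :=
  match @insub nat (fun m => m < n)%N 'I_n (k %% n)%N with
  | Some i => c i | None => 0 end.

(* The monomial  c x^{q^e}  (e even) reduced modulo x^{q^{2n}} - x, i.e.
   c x^{q^{2 ((e/2) mod n)}}. *)
Definition lterm (n : nat) (c : F) (e : nat) : lpoly n :=
  [ffun i : 'I_n => if (val i == (e %/ 2) %% n)%N then c else 0].

Definition lev (q n : nat) (c : lpoly n) (x : F) : F :=
  \sum_(i < n) c i * x ^+ (q ^ (2 * i)).

Definition limage (q n : nat) (c : lpoly n) : {set F} :=
  [set lev q c x | x : F].

Definition inFq2 (q : nat) (x : F) : Prop := x ^+ (q ^ 2) = x.

Definition is_basis_over (q r : nat) (S : {set F}) (v : 'I_r -> F) : Prop :=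
  (forall i, v i \in S) /\
  (forall lam : 'I_r -> F, (forall i, inFq2 q (lam i)) ->
      \sum_(i < r) lam i * v i = 0 -> forall i, lam i = 0) /\
  (forall y, y \in S -> exists lam : 'I_r -> F,
      (forall i, inFq2 q (lam i)) /\ y = \sum_(i < r) lam i * v i).

Definition has_rank (q n : nat) (c : lpoly n) (r : nat) : Prop :=
  exists v : 'I_r -> F, is_basis_over q (limage q c) v.

Definition hermitian (q n : nat) (c : lpoly n) : Prop :=
  forall i : 'I_n, coef c (n - i + 1) = c i ^+ (q ^ (2 * n - 2 * i + 1)).

Definition trace2 (q n : nat) (x : F) : F := \sum_(i < n) x ^+ (q ^ (2 * i)).

Definition bpair (q n : nat) (f g : lpoly n) : F :=
  trace2 q n (\sum_(i < n) f i * g i).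

Definition dual (q n : nat) (C : lpoly n -> Prop) (f : lpoly n) : Prop :=
  hermitian q f /\ forall g, C g -> bpair q f g = 0.

Definition t_design (q n : nat) (C : lpoly n -> Prop) (t : nat) : Prop :=
  forall f : lpoly n, dual q C f -> f != 0 ->
    forall r, has_rank q f r -> ~ (1 <= r <= t)%N.

Definition Hcode (q n d s : nat) (f : lpoly n) : Prop :=
  exists b : nat -> F,
    f = \sum_(1 <= j < ((n - d + 1) %/ 2).+1)
          (lterm n (b j ^+ (q ^ (2 * s * (n - j + 1)))) (2 * s * (n - j + 1))
           + lterm n (b j ^+ (q ^ s)) (2 * s * j)).

Definition Ecode (q n d s : nat) (f : lpoly n) : Prop :=
  exists (b0 : F) (b : nat -> F), b0 ^+ (q ^ n) = b0 /\
    f = lterm n (b0 ^+ (q ^ (s * (n + 1)))) (s * (n + 1))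
        + \sum_(1 <= j < ((n - d) %/ 2).+1)
          (lterm n (b j ^+ (q ^ (s * (n + 2 * j + 1)))) (s * (n + 2 * j + 1))
           + lterm n (b j ^+ (q ^ s)) (s * (n - 2 * j + 1))).

End Defs.

Definition prime_power (q : nat) : Prop :=
  exists p k : nat, prime p /\ (0 < k)%N /\ q = (p ^ k)%N.

(* The trace form is nondegenerate, also on a pair of terms b^(q^A), b^(q^B) with A even and
   B odd (scale b by an element of F_(q^2) outside F_q) and on F_(q^n) for n odd; hence f
   vanishes at the coefficients of index s*w mod n for n-d+1 consecutive w (only the
   orthogonality of f is used, not that it is hermitian).  Reindexed along the progression
   s*w mod n, f becomes a sigma-linearized polynomial of sigma-degree at most d-2, with
   sigma = x^(q^(2s)), composed with a power of Frobenius.  As gcd(s, n) = 1 the fixed field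
   of sigma is F_(q^2), so the kernel of f has at most (q^2)^(d-2) elements and, counting
   F = ker f x im f, the rank of f exceeds n-d+1. *)

From HB Require Import structures.
From mathcomp Require Import all_boot all_order all_algebra all_field.
From mathcomp Require Import perm cyclic zify ring.
Set Implicit Arguments. Unset Strict Implicit. Unset Printing Implicit Defensive.
Import GRing.Theory.
Local Open Scope ring_scope.

Section FiniteFieldCounting.
Variable F : finFieldType.

Lemma card_fixed_expr_le m : (1 < m)%N -> (#|[set x : F | x ^+ m == x]| <= m)%N.
Proof.
move=> m_gt1; pose p : {poly F} := 'X^m - 'X.
have size_p : size p = m.+1 by rewrite size_polyDl ?size_polyXn ?size_polyN ?size_polyX.
have p_neq0 : p != 0 by rewrite -size_poly_eq0 size_p.
rewrite cardE -ltnS -size_p; apply: max_poly_roots p_neq0 _ (enum_uniq _).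
by apply/allP=> x; rewrite mem_enum inE /root !hornerE subr_eq0.
Qed.

Lemma card_fixed_expr_ge m : (0 < m)%N -> (m.-1 %| #|F|.-1)%N ->
  (m <= #|[set x : F | x ^+ m == x]|)%N.
Proof.
move=> m_gt0 m_dvd.
have card_gt1 : (1 < #|F|)%N by rewrite (cardD1 0) (cardD1 1) !inE oner_neq0.
have [z z_in z_prim] : exists2 z, z \in enum [set~ (0 : F)] & (#|F|.-1).-primitive_root z.
  apply/hasP/has_prim_root; rewrite ?enum_uniq // -?cardE ?cardsC1 //; first lia.
  apply/allP=> x; rewrite mem_enum in_setC1 unity_rootE => x_neq0.
  by rewrite -(inj_eq (mulfI x_neq0)) -exprS prednK ?expf_card ?mulr1 //; lia.
have z_neq0 : z != 0 by rewrite mem_enum in_setC1 in z_in.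
(* The roots are 0 and the (m-1)-th roots of unity z ^+ (K * i), i < m-1. *)
set K := (#|F|.-1 %/ m.-1)%N.
have KmN : (K * m.-1)%N = #|F|.-1 by rewrite divnK.
have K_gt0 : (0 < K)%N by move: KmN card_gt1; rewrite lt0n; case: eqP => // ->; lia.
have uroot_inj : injective (fun i : 'I_m.-1 => z ^+ (K * i)).
  move=> i j /eqP; rewrite (eq_prim_root_expr z_prim) !modn_small.
  - by rewrite eqn_pmul2l // => /eqP/val_inj.
  1,2: by apply: (@leq_trans (K * m.-1) _ _ _ (eq_leq KmN)); rewrite ltn_pmul2l.
rewrite {1}(_ : m = 1 + #|'I_m.-1|)%N; last by rewrite card_ord add1n prednK.
have zero_notin : 0 \notin [set z ^+ (K * i) | i : 'I_m.-1].
  by apply/imsetP=> -[i _ /esym/eqP]; rewrite expf_eq0 (negPf z_neq0) andbF.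
rewrite -(card_imset _ uroot_inj) -[1%N]/(nat_of_bool true) -zero_notin -cardsU1.
apply/subset_leq_card/subsetP=> x; rewrite !inE => /predU1P[->|/imsetP[i _ ->]].
  by rewrite expr0n gtn_eqF.
rewrite -exprM; move: (val i) => k.
have -> : (K * k * m = k * #|F|.-1 + K * k)%N by rewrite -KmN; move: m_gt0; clear; nia.
by rewrite exprD mulnC exprM (prim_expr_order z_prim) expr1n mul1r.
Qed.

Lemma card_preimset_le (L : F -> F) (S : {set F}) : {morph L : x y / x - y} ->
  (#|[set x | L x \in S]| <= #|[set x | L x == 0%R]| * #|S|)%N.
Proof.
move=> LB; pose r y := odflt (0 : F) [pick z | L z == y].
have rK x : L (r (L x)) = L x by rewrite /r; case: pickP => [z /eqP //|/(_ x)]; rewrite eqxx.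
pose split_ker x := (x - r (L x), L x).
have split_inj : injective split_ker.
  by move=> x y [e1 e2]; rewrite -(subrK (r (L x)) x) e1 e2 subrK.
rewrite -cardsX -(card_imset _ split_inj).
apply/subset_leq_card/subsetP=> w /imsetP[x]; rewrite inE => xS ->.
by rewrite !inE /= LB rK subrr eqxx.
Qed.

End FiniteFieldCounting.

Lemma coprime_mulmod_inj m s u v : coprime m s -> (u < m)%N -> (v < m)%N ->
  (s * u == s * v %[mod m])%N -> u = v.
Proof.
move=> co u_lt v_lt; wlog le_vu : u v u_lt v_lt / (v <= u)%N.
  by move=> W e; case: (leqP v u) => [|/ltnW] le; [|apply/esym]; apply: W; rewrite // eq_sym.
rewrite eqn_mod_dvd ?leq_mul2l ?le_vu ?orbT // -mulnBr Gauss_dvdr // => m_dvd.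
have [|uv_gt0] := posnP (u - v); first lia.
by have := dvdn_leq uv_gt0 m_dvd; lia.
Qed.

Lemma big_nat_pulse (V : nmodType) lo hi j (G : nat -> V) : (lo <= j < hi)%N ->
  (forall i, i != j -> G i = 0) -> \sum_(lo <= i < hi) G i = G j.
Proof.
move=> j_range G0; rewrite (bigD1_seq j) ?mem_index_iota ?iota_uniq //=.
by rewrite big1_seq ?addr0 // => i /andP[/G0].
Qed.

Section SigmaPolynomials.
Variables (F : finFieldType) (sig : F -> F).
Hypotheses (sigD : {morph sig : x y / x + y}) (sigM : {morph sig : x y / x * y}).
Hypothesis sig1 : sig 1 = 1.

Definition sigma_poly (M : nat) (a : nat -> F) (x : F) : F :=
  \sum_(t < M) a t * iter t sig x.

Lemma sig0 : sig 0 = 0.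
Proof. by apply: (@addrI _ (sig 0)); rewrite -sigD !addr0. Qed.

Lemma sigB : {morph sig : x y / x - y}.
Proof.
have sigN y : sig (- y) = - sig y by apply/eqP; rewrite -subr_eq0 opprK -sigD addNr sig0.
by move=> x y; rewrite sigD sigN.
Qed.

Lemma iter_sigB t : {morph iter t sig : x y / x - y}.
Proof. by elim: t => // t IH x y; rewrite !iterS IH sigB. Qed.

Lemma iter_sigM t : {morph iter t sig : x y / x * y}.
Proof. by elim: t => // t IH x y; rewrite !iterS IH sigM. Qed.

Lemma sigma_poly0 M a : sigma_poly M a 0 = 0.
Proof.
have iter_sig0 t : iter t sig 0 = 0 by elim: t => // t IH; rewrite iterS IH sig0.
by rewrite /sigma_poly big1 // => t _; rewrite iter_sig0 mulr0.
Qed.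

Lemma sigma_poly_divr (c : F) M a : exists g e,
  (forall x, sigma_poly M.+1 a x = sigma_poly M g (sig x - c * x) + e * x) /\
  ((forall t, (t < M)%N -> g t = 0) -> forall t, (0 < t <= M)%N -> a t = 0).
Proof.
elim: M a => [|M IH] a.
  exists (fun _ => 0), (a 0%N); split => [x|_ [] //].
  by rewrite /sigma_poly big_ord1 big_ord0 add0r.
pose a' t := if t == M then a M + a M.+1 * iter M sig c else a t.
have [g' [e [a'_div a'_top]]] := IH a'.
exists (fun t => if t == M then a M.+1 else g' t), e; split => [x|g0 t /andP[t_gt0 t_le]].
  have a_a' : sigma_poly M.+2 a x
      = sigma_poly M.+1 a' x + a M.+1 * iter M sig (sig x - c * x).
    rewrite /sigma_poly big_ord_recr [in LHS]big_ord_recr [in RHS]big_ord_recr /=.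
    rewrite /a' eqxx iter_sigB iter_sigM -iterSr iterS.
    rewrite [in RHS](eq_bigr (fun i : 'I_M => a i * iter i sig x)) => [|i _]; first by ring.
    by rewrite ltn_eqF.
  rewrite a_a' a'_div /sigma_poly [in RHS]big_ord_recr /= eqxx.
  suff -> : \sum_(i < M) (if val i == M then a M.+1 else g' i) * iter i sig (sig x - c * x)
          = \sum_(i < M) g' i * iter i sig (sig x - c * x) by ring.
  by apply: eq_bigr => i _; rewrite ltn_eqF ?ltn_ord.
have aM1 : a M.+1 = 0 by have := g0 M (ltnSn M); rewrite eqxx.
have [->//|t_neq] := eqVneq t M.+1.
have g'0 u : (u < M)%N -> g' u = 0.
  by move=> u_lt; have := g0 u (ltnW u_lt); rewrite ltn_eqF.
have := a'_top g'0 t; rewrite t_gt0 /a' /=.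
case: eqP => [->|_]; last by apply; move: t_le t_neq; clear; lia.
by rewrite aM1 mul0r addr0; apply.
Qed.

Lemma card_sigma_eigen_le v : v != 0 ->
  (#|[set x | (sig x - sig v / v * x == 0)%R]| <= #|[set x | sig x == x]|)%N.
Proof.
move=> v_neq0; have sv_neq0 : sig v != 0.
  by apply: contra_neq (oner_neq0 F) => sv0; rewrite -sig1 -(mulfV v_neq0) sigM sv0 mul0r.
rewrite -(card_imset _ (mulIf (invr_neq0 v_neq0))).
apply/subset_leq_card/subsetP=> w /imsetP[x]; rewrite !inE subr_eq0 => /eqP sx ->.
by apply/eqP/(mulIf sv_neq0); rewrite -sigM divfK // sx; field.
Qed.

Lemma sigma_poly_factor v M a : v != 0 -> sigma_poly M.+2 a v = 0 ->
    (exists2 t, (t <= M.+1)%N & a t != 0) ->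
  exists2 g, (exists2 t, (t <= M)%N & g t != 0) &
    forall x, sigma_poly M.+2 a x = sigma_poly M.+1 g (sig x - sig v / v * x).
Proof.
move=> v_neq0 v_root [t t_le a_t].
have [g [e [a_div a_top]]] := sigma_poly_divr (sig v / v) M.+1 a.
have e0 : e = 0.
  move: v_root; rewrite a_div divfK // subrr sigma_poly0 add0r => /eqP.
  by rewrite mulf_eq0 (negPf v_neq0) orbF => /eqP.
exists g; last by move=> x; rewrite a_div e0 mul0r addr0.
have [/existsP[t' g_t']|/existsPn g0] := boolP [exists t' : 'I_M.+1, g t' != 0].
  by exists t' => //; have := ltn_ord t'.
have a0 := a_top (fun u u_lt => eqP (negbNE (g0 (Ordinal u_lt)))).
case: t t_le a_t => [_ a0_neq0|t t_le]; last by rewrite a0 ?eqxx ?t_le.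
move: v_root; rewrite /sigma_poly big_ord_recl big1 => [|i _]; last first.
  by rewrite a0 ?mul0r // lift0 ltn_ord.
by move/eqP; rewrite addr0 /= mulf_eq0 (negPf a0_neq0) (negPf v_neq0).
Qed.

(* By induction on M: a nonzero root v gives the right factor x |-> sigma x - (sigma v / v) x,
   whose kernel is v times the fixed field of sigma. *)
Lemma card_sigma_poly_roots_le Q M a : (#|[set x | sig x == x]| <= Q)%N ->
  (exists2 t, (t <= M)%N & a t != 0) ->
  (#|[set x | sigma_poly M.+1 a x == 0%R]| <= Q ^ M)%N.
Proof.
move=> fixQ; have Q_gt0 : (0 < Q)%N.
  by apply: leq_trans fixQ; apply/card_gt0P; exists 0; rewrite inE sig0.
have only_root0_le M' a' : (forall x, x != 0 -> sigma_poly M'.+1 a' x != 0) ->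
    (#|[set x | sigma_poly M'.+1 a' x == 0%R]| <= Q ^ M')%N.
  move=> only_root0; apply: (@leq_trans #|[set 0 : F]|).
    by apply/subset_leq_card/subsetP=> x; rewrite !inE; apply: contraLR; apply: only_root0.
  by rewrite cards1 expn_gt0 Q_gt0.
elim: M a => [|M IH] a a_nz.
  apply: only_root0_le => x x_neq0; case: a_nz => t; rewrite leqn0 => /eqP -> a0_neq0.
  by rewrite /sigma_poly big_ord1 mulf_neq0.
have [/forallP only_root0|] := boolP [forall x, (x != 0) ==> (sigma_poly M.+2 a x != 0)].
  by apply: only_root0_le => x; apply/implyP.
rewrite negb_forall => /existsP[v]; rewrite negb_imply negbK => /andP[v_neq0 /eqP v_root].
have [g g_nz a_fact] := sigma_poly_factor v_neq0 v_root a_nz.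
pose L x := sig x - sig v / v * x.
have L_morph : {morph L : x y / x - y} by move=> x y; rewrite /L sigB; ring.
have -> : [set x | sigma_poly M.+2 a x == 0]
        = [set x | L x \in [set y | sigma_poly M.+1 g y == 0]].
  by apply/setP=> x; rewrite !inE a_fact.
apply: leq_trans (card_preimset_le _ L_morph) _.
by rewrite expnS leq_mul ?IH // (leq_trans (card_sigma_eigen_le v_neq0)).
Qed.

End SigmaPolynomials.

Section FrobeniusField.
Variables (F : finFieldType) (q n : nat).
Hypotheses (q_pp : prime_power q) (n_gt0 : (0 < n)%N) (cardF : #|F| = (q ^ (2 * n))%N).

Lemma q_gt1 : (1 < q)%N.
Proof. by case: q_pp => p [k [p_pr [k_gt0 ->]]]; rewrite -(expn0 p) ltn_exp2l ?prime_gt1. Qed.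

Lemma frobD e (x y : F) : (x + y) ^+ (q ^ e) = x ^+ (q ^ e) + y ^+ (q ^ e).
Proof.
case: q_pp => p [k [p_pr [k_gt0 q_eq]]].
have p_char : p \in [pchar F].
  by apply: (@card_finPcharP _ p (k * (2 * n))); rewrite // cardF q_eq -expnM.
by apply: exprDn_pchar; rewrite q_eq -expnM pnatX (pnatE _ p_pr) p_char.
Qed.

Lemma frob0 e : (0 : F) ^+ (q ^ e) = 0.
Proof. by rewrite expr0n expn_eq0 gtn_eqF // ltnW // q_gt1. Qed.

Lemma frobB e (x y : F) : (x - y) ^+ (q ^ e) = x ^+ (q ^ e) - y ^+ (q ^ e).
Proof. by apply: (@addIr _ (y ^+ (q ^ e))); rewrite -frobD !subrK. Qed.

Lemma frob_comp e1 e2 (x : F) : x ^+ (q ^ e1) ^+ (q ^ e2) = x ^+ (q ^ (e1 + e2)).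
Proof. by rewrite -exprM expnD. Qed.

Lemma frob_fixedM a j (x : F) : x ^+ (q ^ a) = x -> x ^+ (q ^ (a * j)) = x.
Proof. by move=> x_fix; elim: j => [|j IH]; rewrite ?muln0 ?expr1 // mulnS -frob_comp x_fix. Qed.

Lemma frob_period (x : F) : x ^+ (q ^ (2 * n)) = x.
Proof. by rewrite -cardF expf_card. Qed.

Lemma frob_modn k (x : F) : x ^+ (q ^ (2 * k)) = x ^+ (q ^ (2 * (k %% n))).
Proof.
rewrite {1}(divn_eq k n) mulnDr -frob_comp mulnCA mulnC.
by rewrite (frob_fixedM _ (frob_period x)).
Qed.

Lemma frob_inj e : injective (fun x : F => x ^+ (q ^ e)).
Proof. by move=> x y /eqP; rewrite -subr_eq0 -frobB expf_eq0 subr_eq0 => /andP[_ /eqP]. Qed.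

Lemma iter_frob e i (y : F) : iter i (fun y => y ^+ (q ^ e)) y = y ^+ (q ^ (e * i)).
Proof. by elim: i => [|i IH]; rewrite ?muln0 ?expr1 // iterS IH frob_comp mulnS addnC. Qed.

Lemma card_frob_fixed_ge m : (m %| 2 * n)%N ->
  (q ^ m <= #|[set x : F | x ^+ (q ^ m) == x]|)%N.
Proof.
move=> /dvdnP[k nE]; apply: card_fixed_expr_ge; first by rewrite expn_gt0 ltnW ?q_gt1.
by rewrite cardF nE mulnC expnM (predn_exp (q ^ m)) dvdn_mulr.
Qed.

Lemma exists_Fq2_notin_Fq : exists l : F, l ^+ (q ^ 2) = l /\ l ^+ q != l.
Proof.
have : ~~ ([set x : F | x ^+ (q ^ 2) == x] \subset [set x : F | x ^+ q == x]).
  apply/negP=> /subset_leq_card sub_le.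
  have := leq_trans (card_frob_fixed_ge (dvdn_mulr _ (dvdnn 2))) sub_le.
  move/leq_trans/(_ (card_fixed_expr_le F q_gt1)).
  by rewrite -{2}(expn1 q) leq_exp2l ?q_gt1.
by case/subsetPn=> l; rewrite !inE => /eqP l_fix l_nfix; exists l.
Qed.

Lemma frob_fixed_coprime s (x : F) : coprime s n ->
  x ^+ (q ^ (2 * s)) = x -> x ^+ (q ^ 2) = x.
Proof.
rewrite coprime_sym => /(coprimeP _ n_gt0)[[u v] /= uv_eq] x_fix.
have e : (2 * n * u = 2 * s * v + 2)%N by lia.
by rewrite -{2}(frob_fixedM u (frob_period x)) e -frob_comp frob_fixedM.
Qed.

Lemma card_Fq2_le : (#|[set x : F | x ^+ (q ^ 2) == x]| <= q ^ 2)%N.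
Proof. by apply: card_fixed_expr_le; rewrite -(expn0 q) ltn_exp2l ?q_gt1. Qed.

Lemma frob_bij e : bijective (fun x : F => x ^+ (q ^ e)).
Proof. exact/injF_bij/frob_inj. Qed.

Lemma trace2D (x y : F) : trace2 q n (x + y) = trace2 q n x + trace2 q n y.
Proof. by rewrite /trace2 -big_split; apply: eq_bigr => i _; rewrite frobD. Qed.

Lemma trace2Zl (l z : F) : l ^+ (q ^ 2) = l -> trace2 q n (l * z) = l * trace2 q n z.
Proof.
move=> l_fix; rewrite /trace2 mulr_sumr; apply: eq_bigr => i _.
by rewrite exprMn (frob_fixedM _ l_fix).
Qed.

Lemma trace2_nondegenerate A (c : F) :
  (forall b, trace2 q n (c * b ^+ (q ^ A)) = 0) -> c = 0.
Proof.
move=> c_orth; apply/eqP/negP => c_neq0.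
have := card_sigma_poly_roots_le (frobD 2) (exprMn _) (expr1n _ _) card_Fq2_le
  (M := n.-1) (a := fun i => c ^+ (q ^ (2 * i))).
have [g _ gK] := frob_bij A.
set roots := [set x | _ == 0]; have -> : roots = [set: F].
  apply/setP=> y; rewrite !inE prednK // -(c_orth (g y)) (gK y) /trace2 /sigma_poly.
  by apply/eqP/eq_bigr => i _; rewrite exprMn iter_frob.
rewrite cardsT cardF -expnM leq_exp2l ?q_gt1 //.
suff /[swap]/[apply] : exists2 t, (t <= n.-1)%N & c ^+ (q ^ (2 * t)) != 0 by lia.
by exists 0%N; rewrite // muln0 expr1; apply/negP.
Qed.

(* Replacing b by l * b with l in F_(q^2) but not in F_q scales the two traces by l and l^q. *)
Lemma trace2_nondegenerate2 A B (c1 c2 : F) : ~~ odd A -> odd B ->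
  (forall b, trace2 q n (c1 * b ^+ (q ^ A)) + trace2 q n (c2 * b ^+ (q ^ B)) = 0) ->
  c1 = 0 /\ c2 = 0.
Proof.
move=> A_even B_odd c_orth.
have [l [l_fix l_nfix]] := exists_Fq2_notin_Fq.
have lA : l ^+ (q ^ A) = l.
  by rewrite -(odd_double_half A) (negPf A_even) add0n -mul2n frob_fixedM.
have lB : l ^+ (q ^ B) = l ^+ q.
  by rewrite -(odd_double_half B) B_odd add1n expnS mulnC exprM -mul2n frob_fixedM.
have lq_fix : l ^+ q ^+ (q ^ 2) = l ^+ q by rewrite -exprM mulnC exprM l_fix.
have c1_orth b : trace2 q n (c1 * b ^+ (q ^ A)) = 0.
  have := c_orth (l * b); rewrite !exprMn lA lB [c1 * _]mulrCA [c2 * _]mulrCA.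
  rewrite (trace2Zl _ l_fix) (trace2Zl _ lq_fix).
  set T1 := trace2 q n (c1 * _); set T2 := trace2 q n (c2 * _) => lT_sum.
  have : (l - l ^+ q) * T1 = l * T1 + l ^+ q * T2 - l ^+ q * (T1 + T2) by ring.
  rewrite lT_sum c_orth mulr0 subr0 => /eqP.
  by rewrite mulf_eq0 subr_eq0 eq_sym (negPf l_nfix) => /eqP.
split; first exact: trace2_nondegenerate c1_orth.
by apply: (@trace2_nondegenerate B) => b; have := c_orth b; rewrite c1_orth add0r.
Qed.

(* On F_(q^n), y^(q^(E+2i)) only depends on E+2i mod n, and as n is odd i |-> E+2i mod n
   permutes 'I_n: the trace becomes a q-linearized polynomial of q-degree < n vanishing on
   the q^n elements of F_(q^n). *)
Lemma trace2_nondegenerate_subfield E (c : F) : odd n ->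
  (forall y, y ^+ (q ^ n) = y -> trace2 q n (c * y ^+ (q ^ E)) = 0) -> c = 0.
Proof.
move=> n_odd c_orth; apply/eqP/negP => c_neq0.
pose h (i : 'I_n) : 'I_n := Ordinal (ltn_pmod (E + 2 * i) n_gt0).
have h_inj : injective h.
  move=> i j /(congr1 val)/eqP; rewrite /= eqn_modDl.
  move/(coprime_mulmod_inj _ (ltn_ord i) (ltn_ord j)).
  by rewrite coprimen2 n_odd => /(_ isT)/val_inj.
pose pi := perm h_inj; pose i0 := Ordinal n_gt0.
pose a j := c ^+ (q ^ (2 * (pi^-1)%g (insubd i0 j))).
have q_gt1' : (1 < q ^ 1)%N by rewrite expn1 q_gt1.
have := card_sigma_poly_roots_le (frobD 1) (exprMn _) (expr1n _ _)
  (card_fixed_expr_le F q_gt1') (M := n.-1) (a := a).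
have subfield_roots : [set y | y ^+ (q ^ n) == y]
    \subset [set y | sigma_poly (fun y : F => y ^+ (q ^ 1)) n.-1.+1 a y == 0].
  apply/subsetP=> y; rewrite !inE => /eqP y_fix.
  have y_modn k : y ^+ (q ^ k) = y ^+ (q ^ (k %% n)).
    by rewrite {1}(divn_eq k n) mulnC -frob_comp (frob_fixedM _ y_fix).
  rewrite -(c_orth y y_fix) /trace2 /sigma_poly prednK // (reindex_inj (@perm_inj _ pi)) /=.
  apply/eqP/eq_bigr => i _; rewrite /a valKd permK iter_frob mul1n permE exprMn frob_comp.
  by rewrite [in RHS]y_modn.
have a_nz : exists2 t, (t <= n.-1)%N & a t != 0.
  exists (val (pi i0)); first by rewrite -ltnS prednK // ltn_ord.
  by rewrite /a valKd permK /= muln0 expr1; apply/negP.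
move/(_ a_nz)/(leq_trans (subset_leq_card subfield_roots)).
move/(leq_trans (card_frob_fixed_ge (dvdn_mull 2 (dvdnn n)))).
by rewrite expn1 leq_exp2l ?q_gt1 //; lia.
Qed.

Lemma levB (f : lpoly F n) : {morph lev q f : x y / x - y}.
Proof.
by move=> x y; rewrite /lev -sumrB; apply: eq_bigr => i _; rewrite frobB mulrBr.
Qed.

Lemma card_limage_le (f : lpoly F n) r : has_rank q f r -> (#|limage q f| <= (q ^ 2) ^ r)%N.
Proof.
case=> v [_ [_ v_span]]; pose Fq2 := [set x : F | x ^+ (q ^ 2) == x].
apply: (@leq_trans #|[set \sum_(i < r) lam i * v i | lam : {ffun 'I_r -> F} in ffun_on Fq2]|).
  apply/subset_leq_card/subsetP=> y /v_span[lam [lam_Fq2 ->]].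
  apply/imsetP; exists [ffun i => lam i]; last by apply: eq_bigr => i _; rewrite ffunE.
  by apply/ffun_onP=> i; rewrite ffunE inE; apply/eqP/lam_Fq2.
apply: leq_trans (leq_imset_card _ _) _; rewrite card_ffun_on card_ord.
by case: r {v v_span} => [|r]; rewrite ?expn0 // leq_exp2r // card_Fq2_le.
Qed.

Lemma rank_nullity_le (f : lpoly F n) r K :
  (#|[set x | lev q f x == 0%R]| <= (q ^ 2) ^ K)%N -> has_rank q f r -> (n <= K + r)%N.
Proof.
move=> ker_le /card_limage_le im_le.
have := leq_trans (card_preimset_le (limage q f) (levB f)) (leq_mul ker_le im_le).
have -> : [set x | lev q f x \in limage q f] = [set: F].
  by apply/setP=> x; rewrite !inE imset_f.
by rewrite cardsT cardF -expnD -expnM leq_exp2l ?q_gt1 //; lia.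
Qed.

Lemma coefE (f : lpoly F n) k : coef f k = f (Ordinal (ltn_pmod k n_gt0)).
Proof. by rewrite /coef (insubT (fun m => m < n)%N (ltn_pmod k n_gt0)). Qed.

Lemma coefMnD (f : lpoly F n) m k : coef f (m * n + k) = coef f k.
Proof. by rewrite !coefE; congr (f _); apply: val_inj; rewrite /= modnMDl. Qed.

Lemma progression_bij s t0 : coprime s n ->
  bijective (fun u : 'I_n => Ordinal (ltn_pmod (s * (t0 + u)) n_gt0)).
Proof.
move=> co; apply: injF_bij => u v /(congr1 val)/eqP; rewrite /= !mulnDr eqn_modDl.
by rewrite coprime_sym in co; move/(coprime_mulmod_inj co (ltn_ord u) (ltn_ord v))/val_inj.
Qed.

Lemma lev_progression s t0 (f : lpoly F n) x : coprime s n ->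
  lev q f x = \sum_(u < n) coef f (s * (t0 + u)) * x ^+ (q ^ (2 * s * (t0 + u))).
Proof.
move=> /(progression_bij t0)/bij_inj h_inj; rewrite /lev (reindex_inj h_inj) /=.
by apply: eq_bigr => u _; rewrite coefE -mulnA [in RHS]frob_modn.
Qed.

Lemma lev_sigma_poly s t0 D (f : lpoly F n) x : coprime s n -> (D <= n)%N ->
    (forall u, (D <= u < n)%N -> coef f (s * (t0 + u)) = 0) ->
  lev q f x = sigma_poly (fun y => y ^+ (q ^ (2 * s))) D (fun u => coef f (s * (t0 + u)))
                         (x ^+ (q ^ (2 * s * t0))).
Proof.
move=> co D_le f_vanish; rewrite (lev_progression t0 _ _ co) /sigma_poly.
rewrite (big_ord_widen _ (fun u => coef f (s * (t0 + u)) * iter u _ (x ^+ (q ^ (2 * s * t0))))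
  D_le).
rewrite [in LHS](bigID (fun u : 'I_n => (u < D)%N)) /= [X in _ + X]big1 ?addr0.
  by apply: eq_bigr => u _; rewrite iter_frob frob_comp; congr (_ * _ ^+ (q ^ _)); ring.
by move=> u; rewrite -leqNgt => u_ge; rewrite f_vanish ?mul0r // u_ge ltn_ord.
Qed.

Lemma has_rank_gt_progression s t0 D (f : lpoly F n) r : coprime s n -> (D <= n)%N ->
    (forall u, (D <= u < n)%N -> coef f (s * (t0 + u)) = 0) ->
  f != 0 -> has_rank q f r -> (n - D < r)%N.
Proof.
move=> co D_le f_vanish f_neq0 f_rank; pose a u := coef f (s * (t0 + u)).
have [u0 u0_lt a_u0] : exists2 u0, (u0 < D)%N & a u0 != 0.
  have [i f_i] : exists i, f i != 0.
    apply/existsP; apply: contraNT f_neq0 => /existsPn f0.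
    by apply/eqP/ffunP => i; rewrite ffunE; apply/eqP/negPn/f0.
  have [g _ gK] := progression_bij t0 co.
  have a_g : a (g i) = f i by rewrite /a coefE (gK i).
  exists (g i); last by rewrite a_g.
  by rewrite ltnNge; apply: contra f_i => u_ge; rewrite -a_g /a f_vanish // u_ge ltn_ord.
have fix_sig : (#|[set x : F | x ^+ (q ^ (2 * s)) == x]| <= q ^ 2)%N.
  apply: (leq_trans _ card_Fq2_le); apply/subset_leq_card/subsetP=> x; rewrite !inE.
  by move/eqP/(frob_fixed_coprime co)/eqP.
have D_gt0 : (0 < D)%N by apply: leq_ltn_trans u0_lt.
have u0_le : (u0 <= D.-1)%N by rewrite -ltnS (prednK D_gt0).
have ker_le : (#|[set x | lev q f x == 0%R]| <= (q ^ 2) ^ D.-1)%N.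
  apply: leq_trans (card_sigma_poly_roots_le (frobD _) (exprMn _) (expr1n _ _) fix_sig
    (ex_intro2 _ _ u0 u0_le a_u0)).
  rewrite (prednK D_gt0) -(card_imset _ (frob_inj (e := 2 * s * t0))).
  apply/subset_leq_card/subsetP=> y /imsetP[x]; rewrite !inE.
  by rewrite (lev_sigma_poly _ co D_le f_vanish) => x_root ->.
by have := rank_nullity_le ker_le f_rank; lia.
Qed.

Lemma has_rank_gt_window s w0 N (f : lpoly F n) r : coprime s n -> (N <= n)%N ->
    (forall w, (w0 <= w < w0 + N)%N -> coef f (s * w) = 0) ->
  f != 0 -> has_rank q f r -> (N < r)%N.
Proof.
move=> co N_le f_vanish; rewrite -{1}(subKn N_le).
apply: (has_rank_gt_progression (t0 := w0 + N) co (leq_subr N n)) => u u_range.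
rewrite (_ : s * (w0 + N + u) = s * n + s * (w0 + (N + u - n)))%N.
  by rewrite coefMnD f_vanish //; lia.
by rewrite -mulnDr; congr (s * _)%N; lia.
Qed.

Section Codes.
Variable s : nat.
Hypotheses (s_odd : odd s) (s_coprime : coprime s n).

Lemma lterm0 e : lterm n (0 : F) e = 0.
Proof. by apply/ffunP=> i; rewrite !ffunE; case: ifP. Qed.

Lemma bpairDr (f g h : lpoly F n) : bpair q f (g + h) = bpair q f g + bpair q f h.
Proof.
rewrite /bpair -trace2D -big_split /=; congr trace2.
by apply: eq_bigr => i _; rewrite ffunE mulrDr.
Qed.

Lemma bpair_lterm (f : lpoly F n) c e :
  bpair q f (lterm n c e) = trace2 q n (coef f (e %/ 2) * c).
Proof.
rewrite /bpair (bigD1 (Ordinal (ltn_pmod (e %/ 2) n_gt0))) //= big1 => [|i i_neq].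
  by rewrite ffunE eqxx addr0 coefE.
by rewrite ffunE ifN ?mulr0 // -(inj_eq val_inj).
Qed.

Lemma dual_coef_pair (C : lpoly F n -> Prop) A B eA eB f : ~~ odd A -> odd B ->
  (forall b, C (lterm n (b ^+ (q ^ A)) eA + lterm n (b ^+ (q ^ B)) eB)) ->
  dual q C f -> coef f (eA %/ 2) = 0 /\ coef f (eB %/ 2) = 0.
Proof.
move=> A_even B_odd C_pair [_ f_orth].
apply: (trace2_nondegenerate2 A_even B_odd) => b.
by rewrite -!bpair_lterm -bpairDr f_orth.
Qed.

Lemma dual_coef_subfield (C : lpoly F n -> Prop) A e f : odd n ->
  (forall y, y ^+ (q ^ n) = y -> C (lterm n (y ^+ (q ^ A)) e)) ->
  dual q C f -> coef f (e %/ 2) = 0.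
Proof.
move=> n_odd C_sub [_ f_orth].
apply: (trace2_nondegenerate_subfield n_odd) => y y_fix.
by rewrite -bpair_lterm f_orth //; apply: C_sub.
Qed.

Lemma t_design_of_windows (C : lpoly F n -> Prop) N : (N <= n)%N ->
  (forall f, dual q C f -> exists w0, forall w, (w0 <= w < w0 + N)%N -> coef f (s * w) = 0) ->
  t_design q C N.
Proof.
move=> N_le windows f f_dual f_neq0 r f_rank /andP[_ r_le].
have [w0 f_vanish] := windows f f_dual.
by have := has_rank_gt_window s_coprime N_le f_vanish f_neq0 f_rank; lia.
Qed.

Lemma Hcode_lterm d j b : (1 <= j <= (n - d + 1) %/ 2)%N ->
  @Hcode F q n d s (lterm n (b ^+ (q ^ (2 * s * (n - j + 1)))) (2 * s * (n - j + 1))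
                    + lterm n (b ^+ (q ^ s)) (2 * s * j)).
Proof.
move=> j_range; exists (fun i => if i == j then b else 0).
rewrite (big_nat_pulse (j := j)) ?eqxx ?ltnS // => i /negbTE ->.
by rewrite !frob0 !lterm0 addr0.
Qed.

Lemma Hcode_design d : odd n != odd d -> (1 <= d <= n - 1)%N ->
  t_design q (@Hcode F q n d s) (n - d + 1).
Proof.
move=> nd_parity d_range; apply: t_design_of_windows => [|f f_dual]; first lia.
set k := ((n - d + 1) %/ 2)%N.
have k2 : (2 * k = n - d + 1)%N.
  rewrite -[RHS]odd_double_half oddD oddB; last lia.
  by move: nd_parity; case: (odd n); case: (odd d) => //= _; rewrite add0n -mul2n -divn2.
have f_zero j : (1 <= j <= k)%N -> coef f (s * (n - j + 1)) = 0 /\ coef f (s * j) = 0.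
  move=> j_range; have A_even : ~~ odd (2 * s * (n - j + 1)) by rewrite !oddM.
  have := dual_coef_pair A_even s_odd (fun b => Hcode_lterm b j_range) f_dual.
  by rewrite -!mulnA !mulKn.
(* The window [n-k+1, n+k] holds the indices s(n-j+1) and, modulo n, s(n+j) = sj. *)
exists (n - k + 1)%N => w w_range; have [w_le|w_gt] := leqP w n.
  have j_range : (1 <= n - w + 1 <= k)%N by lia.
  have [+ _] := f_zero _ j_range.
  by rewrite (_ : n - (n - w + 1) + 1 = w)%N //; lia.
have j_range : (1 <= w - n <= k)%N by lia.
have [_ +] := f_zero _ j_range.
by rewrite -(coefMnD _ s) -mulnDr subnKC // ltnW.
Qed.

Lemma Ecode_lterm0 d y : y ^+ (q ^ n) = y ->
  @Ecode F q n d s (lterm n (y ^+ (q ^ (s * (n + 1)))) (s * (n + 1))).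
Proof.
move=> y_fix; exists y, (fun _ => 0); split => //.
by rewrite big1 ?addr0 // => j _; rewrite !frob0 !lterm0 addr0.
Qed.

Lemma Ecode_lterm d j b : (1 <= j <= (n - d) %/ 2)%N ->
  @Ecode F q n d s (lterm n (b ^+ (q ^ (s * (n + 2 * j + 1)))) (s * (n + 2 * j + 1))
                    + lterm n (b ^+ (q ^ s)) (s * (n - 2 * j + 1))).
Proof.
move=> j_range; exists 0, (fun i => if i == j then b else 0); split; first exact: frob0.
rewrite frob0 lterm0 add0r (big_nat_pulse (j := j)) ?eqxx ?ltnS // => i /negbTE ->.
by rewrite !frob0 !lterm0 addr0.
Qed.

Lemma Ecode_design d : odd n -> odd d -> (1 <= d <= n - 1)%N ->
  t_design q (@Ecode F q n d s) (n - d + 1).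
Proof.
move=> n_odd d_odd d_range; apply: t_design_of_windows => [|f f_dual]; first lia.
set k := ((n - d) %/ 2)%N; set m := ((n + 1) %/ 2)%N.
have k2 : (2 * k = n - d)%N.
  by rewrite -[RHS]odd_double_half oddB ?n_odd ?d_odd; last lia; rewrite add0n -mul2n -divn2.
have m2 : (2 * m = n + 1)%N.
  by rewrite -[RHS]odd_double_half oddD n_odd add0n -mul2n -divn2.
have coef_m : coef f (s * m) = 0.
  have := dual_coef_subfield n_odd (Ecode_lterm0 d) f_dual.
  by rewrite -m2 mulnCA mulKn.
have coef_mj j : (1 <= j <= k)%N -> coef f (s * (m + j)) = 0 /\ coef f (s * (m - j)) = 0.
  move=> j_range; have e1 : (n + 2 * j + 1 = 2 * (m + j))%N by lia.
  have e2 : (n - 2 * j + 1 = 2 * (m - j))%N by lia.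
  have A_even : ~~ odd (s * (n + 2 * j + 1)) by rewrite e1 !oddM /= andbF.
  have := dual_coef_pair A_even s_odd (fun b => Ecode_lterm b j_range) f_dual.
  by rewrite e1 e2 !(mulnCA s) !mulKn.
exists (m - k)%N => w w_range; case: (ltngtP w m) => [w_lt|w_gt|->] //.
  have j_range : (1 <= m - w <= k)%N by lia.
  by have [_] := coef_mj _ j_range; rewrite (_ : m - (m - w) = w)%N //; lia.
have j_range : (1 <= w - m <= k)%N by lia.
by have [] := coef_mj _ j_range; rewrite subnKC // ltnW.
Qed.

End Codes.

End FrobeniusField.

Theorem theorem5p3 (q n s d : nat) (F : finFieldType) :
  prime_power q -> (2 <= n)%N -> odd s -> coprime s n ->
  #|F| = (q ^ (2 * n))%N ->
  ((odd n != odd d) -> (1 <= d <= n - 1)%N ->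
     t_design (F := F) q (@Hcode F q n d s) (n - d + 1)) /\
  (odd n -> odd d -> (1 <= d <= n - 1)%N ->
     t_design (F := F) q (@Ecode F q n d s) (n - d + 1)).
Proof.
move=> q_pp n_ge2 s_odd s_coprime cardF; have n_gt0 : (0 < n)%N by apply: ltnW.
split; first exact: (Hcode_design q_pp n_gt0 cardF s_odd s_coprime).
exact: (Ecode_design q_pp n_gt0 cardF s_odd s_coprime).
Qed.
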